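(* Let $m\geq 3$ and $n\geq 2$ be integers, let $K_m$ be the complete graph of order $m$ and $H_n$ a graph of order $n$. Then $rvc(K_m\diamond H_n)=\lceil m/3\rceil$.
   Context: All graphs are finite, simple, connected and undirected. A rainbow vertex $k$-coloring of $G$ is a map $c:V(G)\to\{1,\dots,k\}$ such that every two vertices are joined by a path whose internal vertices all receive distinct colors; $rvc(G)$ is the least $k$ for which $G$ has one. For graphs $G_m$ (order $m$) and $H_n$ (order $n$) on disjoint vertex sets, the edge corona $G_m\diamond H_n$ is obtained from one copy of $G_m$ and $|E(G_m)|$ vertex-disjoint copies of $H_n$, one per edge of $G_m$, by joining both end vertices of the $j$-th edge of $G_m$ to every vertex of the $j$-th copy of $H_n$. *)

From mathcomp Require Import all_boot.
Set Implicit Arguments. Unset Strict Implicit. Unset Printing Implicit Defensive.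

Definition simple_graph (T : finType) (e : rel T) : Prop :=
  symmetric e /\ irreflexive e.

Definition connected_graph (T : finType) (e : rel T) : Prop :=
  forall x y : T, connect e x y.

Definition complete_rel (m : nat) : rel 'I_m := fun i j => i != j.
Arguments complete_rel m : clear implicits.

Definition edge_of (TG : finType) (eG : rel TG) : pred {set TG} :=
  fun E => [exists x, exists y, eG x y && (E == [set x; y])].

Definition edgeT (TG : finType) (eG : rel TG) := {E : {set TG} | edge_of eG E}.

Definition coronaV (TG TH : finType) (eG : rel TG) : finType :=
  (TG + (edgeT eG * TH))%type.

(* Adjacency in the edge corona: G-edges, H-edges inside each copy, and
   both endpoints of edge E joined to every vertex of the copy of H for E. *)
Definition corona_rel (TG TH : finType) (eG : rel TG) (eH : rel TH)
  : rel (coronaV TH eG) :=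
  fun u v =>
    match u, v with
    | inl x, inl y => eG x y
    | inl x, inr (E, _) => x \in val E
    | inr (E, _), inl y => y \in val E
    | inr (E, h), inr (E', h') => (E == E') && eH h h'
    end.
Arguments corona_rel {TG TH} eG eH.

(* x and y are joined by a path x = v0, v1, ..., vl = y (the walk x :: p)
   whose internal vertices v1, ..., v(l-1) receive pairwise distinct colors. *)
Definition rainbow_connected (T : finType) (e : rel T) (k : nat)
  (c : T -> 'I_k) (x y : T) : Prop :=
  exists p : seq T,
    [/\ path e x p, last x p = y & uniq (map c (behead (belast x p)))].

Definition rainbow_vertex_coloring (T : finType) (e : rel T) (k : nat)
  (c : T -> 'I_k) : Prop :=
  forall x y : T, rainbow_connected e c x y.

Definition has_rvc (T : finType) (e : rel T) (k : nat) : Prop :=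
  exists c : T -> 'I_k, rainbow_vertex_coloring e c.

Definition rvc_is (T : finType) (e : rel T) (k : nat) : Prop :=
  has_rvc e k /\ forall k', has_rvc e k' -> k <= k'.

From mathcomp Require Import all_boot zify.

Set Implicit Arguments. Unset Strict Implicit. Unset Printing Implicit Defensive.

(* A path between the copies of H attached to two distinct edges E, E' of a
   graph G must leave the first copy through an endpoint of E and enter the
   second through an endpoint of E', both internal vertices.  Hence, in a
   rainbow colouring of K_m <> H, no four vertices of K_m share a colour
   (two disjoint edges among them would be monochromatic), so m <= 3k.
   Conversely, if every colour class of K_m has at most three vertices, any
   two vertices are joined by a path with at most two internal vertices, and
   when two are needed (copies attached to disjoint edges) the four endpoints
   cannot all share a colour; i |-> i / 3 is such a colouring. *)

Definition internal (T : Type) (x : T) (p : seq T) : seq T := behead (belast x p).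

Lemma mem_internal (T : eqType) (x : T) p u :
  u \in x :: p -> u != x -> u != last x p -> u \in internal x p.
Proof.
rewrite lastI mem_rcons inE /internal => /predU1P[->|]; first by rewrite eqxx.
by case: p => [|y p] //=; rewrite inE => /predU1P[->|]; first by rewrite eqxx.
Qed.

Lemma path_crossing_edge (T : eqType) (e : rel T) (P : pred T) x p :
  path e x p -> P x -> ~~ P (last x p) ->
  exists u v, [/\ u \in x :: p, v \in p, e u v, P u & ~~ P v].
Proof.
elim: p x => [|y p IH] x /=; first by move=> _ ->.
case/andP=> exy pth_y Px Plast; have [Py | nPy] := boolP (P y).
  have [u [v [up vp euv Pu nPv]]] := IH y pth_y Py Plast.
  exists u, v; split=> //; rewrite inE ?up ?vp ?orbT //.
by exists x, y; split; rewrite ?mem_head.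
Qed.

Section Rainbow.
Variables (T : finType) (e : rel T) (k : nat) (c : T -> 'I_k).

Lemma rainbow_connected_refl x : rainbow_connected e c x x.
Proof. by exists [::]. Qed.

Lemma rainbow_connected_edge x y : e x y -> rainbow_connected e c x y.
Proof. by exists [:: y]; rewrite /= andbT. Qed.

Lemma rainbow_connected_path2 x u y : e x u -> e u y -> rainbow_connected e c x y.
Proof. by exists [:: u; y]; rewrite /= andbT; split=> //; apply/andP. Qed.

Lemma rainbow_connected_path3 x u v y :
  e x u -> e u v -> e v y -> c u != c v -> rainbow_connected e c x y.
Proof.
by exists [:: u; v; y]; rewrite /= !inE !andbT; split=> //; apply/and3P.
Qed.

End Rainbow.

Lemma map_uniq_inj_in (T1 T2 : eqType) (f : T1 -> T2) (s : seq T1) :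
  uniq (map f s) -> {in s &, injective f}.
Proof.
elim: s => [|z s IH] //= /andP[fz_notin uniq_fs] x y; rewrite !inE.
case/predU1P=> [->|xs] /predU1P[->|ys] // fxy.
- by rewrite fxy map_f in fz_notin.
- by rewrite -fxy map_f in fz_notin.
- exact: IH.
Qed.

Section EdgeCorona.
Variables (TG TH : finType) (eG : rel TG) (eH : rel TH).
Notation V := (coronaV TH eG).
Notation e := (corona_rel eG eH).

Lemma edge_endpoints (E : edgeT eG) : exists x y, eG x y /\ val E = [set x; y].
Proof. by case: E => E /= /existsP[x /existsP[y /andP[exy /eqP->]]]; exists x, y. Qed.

Lemma edge_nonempty (E : edgeT eG) : exists x, x \in val E.
Proof. by have [x [y [_ ->]]] := edge_endpoints E; exists x; rewrite set21. Qed.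

Lemma card_edge (eG_irr : irreflexive eG) (E : edgeT eG) : #|val E| = 2.
Proof.
have [x [y [exy ->]]] := edge_endpoints E.
by rewrite cards2; case: eqVneq exy => [->|]; rewrite ?eG_irr.
Qed.

Definition in_copy (E : edgeT eG) (u : V) : bool :=
  if u is inr (F, _) then F == E else false.

Lemma corona_leave_copy E u v :
  e u v -> in_copy E u -> ~~ in_copy E v -> exists2 y, v = inl y & y \in val E.
Proof.
case: u => [//|[F h]]; case: v => [y|[F' h']] /=.
  by move=> Fy /eqP FE; exists y; rewrite -?FE.
by case/andP=> /eqP -> _ ->.
Qed.

Lemma corona_enter_copy E u v :
  e u v -> ~~ in_copy E u -> in_copy E v -> exists2 z, u = inl z & z \in val E.
Proof.
case: v => [//|[F h]]; case: u => [z|[F' h']] /=.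
  by move=> Fz _ /eqP FE; exists z; rewrite -?FE.
by case/andP=> /eqP -> _ /negPf ->.
Qed.

Lemma corona_path_between_copies (E E' : edgeT eG) h h' p :
  E != E' -> path e (inr (E, h)) p -> last (inr (E, h)) p = inr (E', h') ->
  exists y z, [/\ y \in val E, z \in val E', inl y \in internal (inr (E, h)) p
                & inl z \in internal (inr (E, h)) p].
Proof.
move=> EE' pth lst.
have out_E : ~~ in_copy E (last (inr (E, h)) p) by rewrite lst /= eq_sym.
have [u [v [_ vp euv Eu nEv]]] := path_crossing_edge pth (eqxx E) out_E.
have [y ? yE] := corona_leave_copy euv Eu nEv; subst v.
have out_E' : ~~ in_copy E' (inr (E, h)) by [].
have in_E' : ~~ ~~ in_copy E' (last (inr (E, h)) p) by rewrite lst /= eqxx.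
have [u' [v' [u'p _ eu'v' nE'u' E'v']]] :=
  path_crossing_edge (P := [pred u | ~~ in_copy E' u]) pth out_E' in_E'.
have [z ? zE'] := corona_enter_copy eu'v' nE'u' (negbNE E'v'); subst u'.
by exists y, z; split=> //; apply: mem_internal; rewrite ?lst // inE vp orbT.
Qed.

Lemma rainbow_corona_monochromatic_edges_meet k (c : V -> 'I_k) (h : TH) j
    (E E' : edgeT eG) :
  rainbow_vertex_coloring e c -> {in val E :|: val E', forall x, c (inl x) = j} ->
  ~~ [disjoint val E & val E'].
Proof.
move=> rainbow_c mono; rewrite -setI_eq0; apply/set0Pn.
have [<-|EE'] := eqVneq E E'.
  by have [x xE] := edge_nonempty E; exists x; rewrite setIid.
have [p [pth lst uniq_cp]] := rainbow_c (inr (E, h)) (inr (E', h)).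
have [y [z [yE zE' y_int z_int]]] := corona_path_between_copies EE' pth lst.
have cy : c (inl y) = j by apply: mono; rewrite inE yE.
have cz : c (inl z) = j by apply: mono; rewrite inE zE' orbT.
have [yz] := map_uniq_inj_in uniq_cp y_int z_int (etrans cy (esym cz)).
by exists y; rewrite inE yE yz zE'.
Qed.

End EdgeCorona.

Lemma leq_card_fibers (T rT : finType) (f : T -> rT) q :
  (forall j, #|[set x | f x == j]| <= q) -> #|T| <= #|rT| * q.
Proof.
move=> fiber_le; rewrite -sum1_card (partition_big f predT) //= -sum_nat_const.
by apply: leq_sum => j _; rewrite sum1dep_card.
Qed.

Lemma fibers_separate (T rT : finType) (f : T -> rT) q (A B : {set T}) :
  (forall j, #|[set x | f x == j]| <= q) -> [disjoint A & B] ->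
  0 < #|A| -> 0 < #|B| -> q < #|A| + #|B| ->
  exists x y, [/\ x \in A, y \in B & f x != f y].
Proof.
move=> fiber_le disjAB /card_gt0P[a aA] /card_gt0P[b bB] AB_gt_q.
have [/existsP[x /existsP[y /and3P[xA yB fxy]]]|] :=
  boolP [exists x, exists y, [&& x \in A, y \in B & f x != f y]].
  by exists x, y.
rewrite negb_exists => /forallP same; suff: #|A| + #|B| <= q by rewrite leqNgt AB_gt_q.
have {}same x y : x \in A -> y \in B -> f x = f y.
  move=> xA yB; apply/eqP; move: (same x); rewrite negb_exists => /forallP/(_ y).
  by rewrite xA yB negbK.
rewrite -(cardsUI A B) (disjoint_setI0 disjAB) cards0 addn0.
apply: leq_trans (fiber_le (f b)); apply/subset_leq_card/subsetP => x.
rewrite !inE => /orP[xA|xB]; apply/eqP; first exact: same.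
by rewrite -(same a x aA xB) (same a b aA bB).
Qed.

Section CompleteCorona.
Variables (m : nat) (TH : finType) (eH : rel TH).
Notation V := (coronaV TH (complete_rel m)).
Notation e := (corona_rel (complete_rel m) eH).

Lemma complete_rel_irreflexive : irreflexive (complete_rel m).
Proof. by move=> i; rewrite /complete_rel eqxx. Qed.

Lemma complete_edge (a b : 'I_m) : a != b -> edge_of (complete_rel m) [set a; b].
Proof.
move=> ab; apply/existsP; exists a; apply/existsP; exists b.
by rewrite /complete_rel ab eqxx.
Qed.

Lemma rainbow_complete_corona_class_le3 k (c : V -> 'I_k) (h : TH) j :
  rainbow_vertex_coloring e c -> #|[set i | c (inl i) == j]| <= 3.
Proof.
move=> rainbow_c; rewrite leqNgt; apply/negP; set A := [set i | _] => A_gt3.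
have /card_gt1P[a [b [aA bA ab]]] : 1 < #|A| by lia.
have /card_gt1P[a' [b' [a'A b'A a'b']]] : 1 < #|A :\: [set a; b]|.
  have := cardsID [set a; b] A; have := subset_leq_card (subsetIr A [set a; b]).
  rewrite cards2 ab; lia.
have abA : [set a; b] \subset A by rewrite subUset !sub1set aA bA.
have /andP[a'b'A disj] :
    ([set a'; b'] \subset A) && [disjoint [set a'; b'] & [set a; b]].
  by rewrite -subsetD subUset !sub1set a'A b'A.
pose E : edgeT (complete_rel m) := exist _ [set a; b] (complete_edge ab).
pose E' : edgeT (complete_rel m) := exist _ [set a'; b'] (complete_edge a'b').
have ABA : [set a; b] :|: [set a'; b'] \subset A by rewrite subUset abA a'b'A.
have mono : {in val E :|: val E', forall x, c (inl x) = j}.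
  by move=> x /(subsetP ABA); rewrite inE => /eqP.
have := rainbow_corona_monochromatic_edges_meet h rainbow_c mono.
by rewrite disjoint_sym disj.
Qed.

Lemma rainbow_complete_corona_of_class_le3 k (c : V -> 'I_k) :
  (forall j, #|[set i | c (inl i) == j]| <= 3) -> rainbow_vertex_coloring e c.
Proof.
move=> class_le3 [x|[E h]] [y|[E' h']].
- have [<-|xy] := eqVneq x y; first exact: rainbow_connected_refl.
  exact: rainbow_connected_edge.
- have [xE'|xE'] := boolP (x \in val E'); first exact: rainbow_connected_edge.
  have [a aE'] := edge_nonempty E'.
  apply: (rainbow_connected_path2 c (u := inl a)) => //=.
  by apply: contraNneq xE' => ->.
- have [yE|yE] := boolP (y \in val E); first exact: rainbow_connected_edge.
  have [a aE] := edge_nonempty E.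
  apply: (rainbow_connected_path2 c (u := inl a)) => //=.
  by apply: contraNneq yE => <-.
- have [disj|] := boolP [disjoint val E & val E']; last first.
    rewrite -setI_eq0 => /set0Pn[a /setIP[aE aE']].
    exact: (rainbow_connected_path2 c (u := inl a)).
  have card_E := card_edge complete_rel_irreflexive.
  have [x [y [xE yE' cxy]]] :
      exists x y, [/\ x \in val E, y \in val E' & c (inl x) != c (inl y)].
    by apply: (fibers_separate class_le3 disj); rewrite ?card_E.
  apply: (rainbow_connected_path3 (u := inl x) (v := inl y)) => //=.
  by apply: contraNneq cxy => ->.
Qed.

End CompleteCorona.

Lemma card_div3_class m q : #|[set i : 'I_m | i %/ 3 == q]| <= 3.
Proof.
pose mod3 (i : 'I_m) : 'I_3 := Ordinal (ltn_pmod i (isT : 0 < 3)).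
have mod3_inj : {in [set i : 'I_m | i %/ 3 == q] &, injective mod3}.
  move=> i j; rewrite !inE => /eqP iq /eqP jq [] ij_mod; apply: val_inj.
  by rewrite /= (divn_eq i 3) (divn_eq j 3) iq jq ij_mod.
by have := @leq_card_in _ _ mod3 _ mod3_inj; rewrite card_ord.
Qed.

Section ThirdsColoring.
Variables (m : nat) (TH : finType) (m_gt0 : 0 < m).

Lemma div3_lt_ceil_div3 (i : 'I_m) : i %/ 3 < (m + 2) %/ 3.
Proof. by have := ltn_ord i; lia. Qed.

Lemma ceil_div3_gt0 : 0 < (m + 2) %/ 3.
Proof. by lia. Qed.

Definition thirds_coloring (u : coronaV TH (complete_rel m)) : 'I_((m + 2) %/ 3) :=
  if u is inl i then Ordinal (div3_lt_ceil_div3 i) else Ordinal ceil_div3_gt0.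

Lemma thirds_coloring_class j : #|[set i | thirds_coloring (inl i) == j]| <= 3.
Proof.
apply: leq_trans (card_div3_class m j); apply/subset_leq_card/subsetP => i.
by rewrite !inE -(inj_eq val_inj).
Qed.

End ThirdsColoring.

Theorem theorem8 (m n : nat) (TH : finType) (eH : rel TH) :
  3 <= m -> 2 <= n -> #|TH| = n ->
  simple_graph eH -> connected_graph eH ->
  rvc_is (corona_rel (complete_rel m) eH) ((m + 2) %/ 3).
Proof.
move=> m_ge3 n_ge2 card_TH _ _.
have /card_gt0P[h _] : 0 < #|TH| by rewrite card_TH (leq_trans _ n_ge2).
have m_gt0 : 0 < m by apply: leq_trans m_ge3.
split.
  exists (thirds_coloring m_gt0).
  exact/rainbow_complete_corona_of_class_le3/thirds_coloring_class.
move=> k [c rainbow_c].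
have := leq_card_fibers (fun j => rainbow_complete_corona_class_le3 h j rainbow_c).
rewrite !card_ord; lia.
Qed.
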